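(* For any two relatively prime integers $m,n\ge2$, \[\operatorname{spec}(U_m)\cap\operatorname{spec}(U_n)=\{0,1,-1\},\] where $\operatorname{spec}(U_q)$ is the set of $\lambda\in\mathbb{R}$ such that $U_qf=\lambda f$ for some nonzero $f\in\mathcal{R}$.
   Context: $\mathcal{R}$ denotes the real vector space of rational functions $f(x)=A(x)/B(x)$ with $A,B\in\mathbb{R}[x]$, $B(0)\neq 0$ and $\deg A<\deg B$. For $f$ with Taylor expansion $f(x)=\sum_{n\ge0}a_nx^n$ at $0$ and a positive integer $q$, $U_qf(x)=\sum_{n\ge 0}a_{qn}x^n$. *)

From HB Require Import structures.
From mathcomp Require Import all_boot all_order all_algebra.
From mathcomp Require Import reals.
Set Implicit Arguments. Unset Strict Implicit. Unset Printing Implicit Defensive.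
Import Order.TTheory GRing.Theory Num.Theory.
Local Open Scope ring_scope.

(* f = A/B belongs to the space \mathcal{R}: B(0) <> 0 and deg A < deg B
   (size = degree + 1; for A = 0 this holds whenever B <> 0). *)
Definition inRat (R : realType) (A B : {poly R}) : Prop :=
  B.[0] != 0 /\ (size A < size B)%N.

(* a is the Taylor sequence of A/B at 0, i.e. B(x) * sum_n a_n x^n = A(x)
   as formal power series (coefficientwise Cauchy product). *)
Definition is_taylor (R : realType) (A B : {poly R}) (a : nat -> R) : Prop :=
  forall n : nat, \sum_(k < n.+1) B`_k * a (n - k)%N = A`_n.

(* lambda is an eigenvalue of U_q on \mathcal{R}: there is a nonzero
   f = A/B in \mathcal{R} with Taylor coefficients a such that
   U_q f = lambda f, i.e. a_{q k} = lambda a_k for all k. *)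
Definition in_spec (R : realType) (q : nat) (lam : R) : Prop :=
  exists (A B : {poly R}) (a : nat -> R),
    [/\ inRat A B, A != 0, is_taylor A B a &
        forall k : nat, a (q * k)%N = lam * a k].

From HB Require Import structures.
From mathcomp Require Import all_boot all_order all_algebra.
From mathcomp Require Import reals complex ring zify.
From Stdlib Require Import Classical.
Set Implicit Arguments. Unset Strict Implicit. Unset Printing Implicit Defensive.
Import Order.TTheory GRing.Theory Num.Theory.
Local Open Scope ring_scope.

(* Let a be the Taylor sequence of f = A/B with U_q f = lam f and lam <> 0, and let
   L_a be the functional X^i |-> a_i on polynomials.  L_a kills every multiple of the
   reversed denominator, so over C there is a monic M whose multiples are exactly the
   polynomials all of whose multiples L_a kills.  Since L_a (P \Po X^q) = lam L_a P, the
   root set of M is stable under z |-> z^q; hence it consists of roots of unity and L_a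
   kills the multiples of some (X^N - 1)^D.  For the least j such that L_a kills the
   multiples of (X^N - 1)^(j+1), the sequence y_k = L_a (X^k (X^N - 1)^j) is nonzero,
   N-periodic and satisfies y_(qk) = lam q^-j y_k, which forces |lam| = q^j.  For coprime
   m, n >= 2 the powers m^i and n^j only meet at 1.  Conversely 0, 1 and -1 are
   eigenvalues of every U_q, with eigenfunctions C(x)/(1 - x^p) whose Taylor sequences
   are periodic. *)

Lemma pigeonhole_seq (T : eqType) (s : seq T) (g : nat -> T) :
  (forall i, g i \in s) -> exists i j, (i < j)%N /\ g i = g j.
Proof.
move=> gs; have: ~~ uniq [seq g i | i <- iota 0 (size s).+1].
  have sub_s : {subset [seq g i | i <- iota 0 (size s).+1] <= s}.
    by move=> _ /mapP[i _ ->].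
  by apply/negP => /uniq_leq_size/(_ sub_s); rewrite size_map size_iota ltnn.
case/(uniqPn (g 0%N)) => i [j [lt_ij]]; rewrite size_map size_iota => lt_j.
have lt_i := ltn_trans lt_ij lt_j.
by rewrite !(nth_map 0%N) ?size_iota // !nth_iota // => eq_ij; exists i, j.
Qed.

Lemma exists_threshold (p : nat -> Prop) D : ~ p 0%N -> p D -> exists2 j, ~ p j & p j.+1.
Proof.
elim: D => [|D IH] np0 pD; first by [].
by case: (classic (p D)) => [pD' | npD]; [exact: IH | exists D].
Qed.

Lemma coprime_expn_eq m n i j : (1 < m)%N -> coprime m n -> (m ^ i = n ^ j)%N -> i = 0%N.
Proof.
move=> m1 cop; case: i => // i eq_ij; have := coprimeXr j cop.
by rewrite -eq_ij coprime_pexpr // /coprime gcdnn => /eqP m_eq1; rewrite m_eq1 in m1.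
Qed.

Lemma common_unity_exponent (K : pzRingType) (s : seq K) :
  {in s, forall z, exists2 N, (0 < N)%N & z ^+ N = 1} ->
  exists2 N, (0 < N)%N & {in s, forall z, z ^+ N = 1}.
Proof.
elim: s => [|w s IH] unity; first by exists 1%N.
have [Nw Nw0 wN] := unity w (mem_head w s).
have [Ns Ns0 sN] := IH (fun z zs => unity z (@mem_behead _ (w :: s) z zs)).
exists (Nw * Ns)%N => [|z]; first by rewrite muln_gt0 Nw0.
rewrite in_cons => /predU1P [-> | zs]; first by rewrite exprM wN expr1n.
by rewrite mulnC exprM sN ?expr1n.
Qed.

Lemma pow_closed_roots_of_unity (K : idomainType) (r : seq K) q : (1 < q)%N ->
  0 \notin r -> {in r, forall z, z ^+ q \in r} ->
  exists2 N, (0 < N)%N & {in r, forall z, z ^+ N = 1}.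
Proof.
move=> q1 r0 closed; apply: common_unity_exponent => z zr.
have orbit i : z ^+ (q ^ i) \in r.
  by elim: i => [|i IH]; rewrite ?expn0 ?expr1 // expnSr exprM closed.
have [i [j [lt_ij eq_ij]]] := pigeonhole_seq orbit.
have lt_qij : (q ^ i < q ^ j)%N by rewrite ltn_exp2l.
exists (q ^ j - q ^ i)%N; first by rewrite subn_gt0.
have zi0 : z ^+ (q ^ i) != 0 by apply: contraNneq r0 => <-; apply: orbit.
by apply: (mulfI zi0); rewrite -exprD subnKC ?(ltnW lt_qij) // mulr1.
Qed.

Lemma prod_XsubC_dvdp_XnsubC_exp (K : idomainType) (r : seq K) N :
  {in r, forall z, z ^+ N = 1} -> \prod_(z <- r) ('X - z%:P) %| ('X^N - 1) ^+ size r.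
Proof.
elim: r => [|z r IH] unity; first by rewrite big_nil.
rewrite big_cons exprS dvdp_mul //.
  by rewrite dvdp_XsubCl /root !hornerE unity ?mem_head ?subrr.
by apply: IH => w wr; rewrite unity // in_cons wr orbT.
Qed.

Lemma prod_XsubC_dvdp_comp_Xn (K : idomainType) (r : seq K) q :
  \prod_(z <- r) ('X - z%:P) %| (\prod_(z <- r) ('X - (z ^+ q)%:P)) \Po 'X^q.
Proof.
elim: r => [|z r IH]; first by rewrite !big_nil comp_polyC.
rewrite !big_cons comp_polyM dvdp_mul //.
by rewrite dvdp_XsubCl /root comp_polyB comp_polyX comp_polyC !hornerE subrr.
Qed.

Lemma XnsubC_comp_Xn (K : comNzRingType) N q :
  ('X^N - 1) \Po 'X^q = ('X^N - 1) * \sum_(i < q) 'X^N ^+ i :> {poly K}.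
Proof. by rewrite -subrX1 comp_polyB comp_polyC rmorphXn /= comp_polyX -!exprM mulnC. Qed.

Lemma XnsubC_dvdp_geom_sub (K : idomainType) N q :
  ('X^N - 1 : {poly K}) %| \sum_(i < q) 'X^N ^+ i - q%:R.
Proof.
rewrite -[q in q%:R]card_ord -sumr_const -sumrB.
apply: (big_ind (fun p => 'X^N - 1 %| p)) => [|p1 p2|i _]; first exact: dvdp0.
  exact: dvdp_add.
by rewrite [X in _ %| X]subrX1 dvdp_mulIl.
Qed.

Lemma periodic_eigen_norm1 (K : numDomainType) (y : nat -> K) N q (mu : K) k0 :
  (0 < N)%N -> mu != 0 -> (forall k, y (k + N)%N = y k) ->
  (forall k, y (q * k)%N = mu * y k) -> y k0 != 0 -> `|mu| = 1.
Proof.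
move=> N0 mu0 y_per y_eigen yk0.
have y_mod u : y u = y (u %% N)%N.
  rewrite {1}(divn_eq u N) addnC; elim: (u %/ N)%N => [|i IH]; first by rewrite mul0n addn0.
  by rewrite mulSnr addnA y_per.
have y_pow i k : y (q ^ i * k)%N = mu ^+ i * y k.
  elim: i k => [|i IH] k; first by rewrite expn0 mul1n expr0 mul1r.
  by rewrite expnS -mulnA y_eigen IH exprS mulrA.
have orbit i : (q ^ i %% N)%N \in iota 0 N by rewrite mem_iota ltn_pmod.
have [i [j [lt_ij eq_ij]]] := pigeonhole_seq orbit.
have mu_ij : mu ^+ j = mu ^+ i.
  apply: (mulIf yk0); rewrite -!y_pow y_mod [RHS]y_mod.
  by rewrite -(modnMml (q ^ j)) -(modnMml (q ^ i)) eq_ij.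
have : mu ^+ (j - i) = 1.
  by apply: (mulfI (expf_neq0 i mu0)); rewrite -exprD subnKC ?(ltnW lt_ij) // mulr1.
move/(congr1 Num.norm)/eqP; rewrite normrX normr1 pexpr_eq1 ?subn_gt0 //.
by move/eqP.
Qed.

Section SeqFunctional.
Variable K : fieldType.
Implicit Types (a : nat -> K) (P Q : {poly K}).

Definition Lseq a P := \sum_(i < size P) P`_i * a i.

Lemma Lseq_widen a P n : (size P <= n)%N -> Lseq a P = \sum_(i < n) P`_i * a i.
Proof.
move=> lePn; rewrite /Lseq (big_ord_widen n (fun i => P`_i * a i) lePn).
rewrite [RHS](bigID (fun i : 'I_n => (i < size P)%N)) /= [X in _ = _ + X]big1 ?addr0 //.
by move=> i; rewrite -leqNgt => /(nth_default 0) ->; rewrite mul0r.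
Qed.

Lemma LseqD a P Q : Lseq a (P + Q) = Lseq a P + Lseq a Q.
Proof.
set n := maxn (size P) (size Q).
rewrite (@Lseq_widen _ P n) ?leq_maxl // (@Lseq_widen _ Q n) ?leq_maxr //.
rewrite (@Lseq_widen _ _ n) ?(leq_trans (size_polyD _ _)) // -big_split /=.
by apply: eq_bigr => i _; rewrite coefD mulrDl.
Qed.

Lemma LseqZ a c P : Lseq a (c *: P) = c * Lseq a P.
Proof.
rewrite (@Lseq_widen _ _ _ (size_scale_leq c P)) /Lseq mulr_sumr.
by apply: eq_bigr => i _; rewrite coefZ mulrA.
Qed.

Lemma LseqB a P Q : Lseq a (P - Q) = Lseq a P - Lseq a Q.
Proof. by rewrite LseqD -scaleN1r LseqZ mulN1r. Qed.

Lemma Lseq0 a : Lseq a 0 = 0.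
Proof. by rewrite /Lseq size_poly0 big_ord0. Qed.

Lemma LseqXn a n : Lseq a 'X^n = a n.
Proof.
rewrite /Lseq size_polyXn big_ord_recr /= big1 ?add0r.
  by rewrite coefXn eqxx mul1r.
by move=> i _; rewrite coefXn (ltn_eqF (ltn_ord i)) mul0r.
Qed.

Lemma Lseq_mulXn a P n : Lseq a (P * 'X^n) = Lseq (fun i => a (i + n)%N) P.
Proof.
rewrite (@Lseq_widen _ _ (n + size P)); last first.
  by rewrite (leq_trans (size_polyMleq _ _)) // size_polyXn addnS addnC.
rewrite big_split_ord /= big1 ?add0r => [|i _]; last by rewrite coefMXn ltn_ord mul0r.
by apply: eq_bigr => i _; rewrite coefMXn ltnNge leq_addr addKn addnC.
Qed.

Lemma Lseq_comp_Xn a P q : Lseq a (P \Po 'X^q) = Lseq (fun i => a (q * i)%N) P.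
Proof.
elim/poly_ind: P a => [|P c IH] a; first by rewrite comp_poly0 !Lseq0.
have LseqC b : Lseq b c%:P = c * b 0%N by rewrite -[c%:P]mulr1 mul_polyC -(expr0 'X) LseqZ LseqXn.
rewrite comp_poly_MXaddC !LseqD !LseqC muln0 Lseq_mulXn -(expr1 'X) Lseq_mulXn IH.
by congr (_ + _); apply: eq_bigr => i _; rewrite mulnDr muln1.
Qed.

Definition annihilates P a := forall Q, Lseq a (Q * P) = 0.

Lemma annihilatesP P a : annihilates P a <-> forall n, Lseq a ('X^n * P) = 0.
Proof.
split=> [ann n | ann0 Q]; first exact: ann.
suff annXn n : Lseq a (Q * 'X^n * P) = 0 by rewrite -[Q]mulr1 -(expr0 'X) annXn.
elim/poly_ind: Q n => [|Q c IH] n; first by rewrite !mul0r Lseq0.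
rewrite !mulrDl LseqD -(mulrA Q) -exprS IH add0r -!mulrA mul_polyC LseqZ.
by rewrite ann0 mulr0.
Qed.

Lemma annihilates_dvdp P Q a : annihilates P a -> P %| Q -> annihilates Q a.
Proof. by move=> annP /dvdpP [D ->] R; rewrite mulrA annP. Qed.

Lemma annihilates_modp P Q a : annihilates P a -> annihilates Q a -> annihilates (Q %% P) a.
Proof.
move=> annP annQ R.
rewrite -[Q %% P](addKr (Q %/ P * P)) -divp_eq addrC.
by rewrite mulrBr LseqB annQ mulrA annP subr0.
Qed.

Lemma min_annihilator_exists P a : P != 0 -> annihilates P a ->
  exists M, [/\ M != 0, annihilates M a & forall Q, annihilates Q a -> M %| Q].
Proof.
elim: {P}(size P) {-2}P (leqnn (size P)) => [|n IH] P szP P0 annP.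
  by move: P0; rewrite -size_poly_eq0 -leqn0 szP.
case: (classic (exists2 Q, annihilates Q a & ~~ (P %| Q))) => [[Q annQ PnQ] | noQ]; last first.
  exists P; split=> // Q annQ; apply/negPn/negP => PnQ.
  by apply: noQ; exists Q => //; apply/negP.
have modP0 : Q %% P != 0 by apply: contraNneq PnQ => /modp_eq0P.
apply: (IH (Q %% P)) => //; last exact: annihilates_modp.
by rewrite -ltnS (leq_trans _ szP) // ltn_modp.
Qed.

End SeqFunctional.

Lemma Lseq_map (K L : fieldType) (f : {rmorphism K -> L}) a P :
  Lseq (fun i => f (a i)) (map_poly f P) = f (Lseq a P).
Proof.
by rewrite /Lseq size_map_poly rmorph_sum; apply: eq_bigr => i _; rewrite coef_map rmorphM.
Qed.

Lemma annihilates_map (K L : fieldType) (f : {rmorphism K -> L}) a P :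
  annihilates (map_poly f P) (fun i => f (a i)) <-> annihilates P a.
Proof.
have mapXnM n : 'X^n * map_poly f P = map_poly f ('X^n * P) by rewrite rmorphM /= map_polyXn.
rewrite !annihilatesP; split=> ann n; have := ann n; rewrite mapXnM Lseq_map.
  by move=> /eqP; rewrite fmorph_eq0 => /eqP.
by move=> ->; rewrite rmorph0.
Qed.

Section EigenSequence.
Variables (K : fieldType) (q : nat) (lam : K) (a : nat -> K).
Hypothesis a_eigen : forall k, a (q * k)%N = lam * a k.

Lemma Lseq_comp_eigen P : Lseq a (P \Po 'X^q) = lam * Lseq a P.
Proof. by rewrite Lseq_comp_Xn /Lseq mulr_sumr; apply: eq_bigr => i _; rewrite a_eigen mulrCA. Qed.

Lemma annihilates_comp_eigen P : lam != 0 -> annihilates (P \Po 'X^q) a -> annihilates P a.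
Proof.
by move=> lam0 annPq Q; apply: (mulfI lam0); rewrite -Lseq_comp_eigen comp_polyM annPq mulr0.
Qed.

Lemma min_annihilator_roots_pow_closed (r : seq K) : lam != 0 ->
  annihilates (\prod_(z <- r) ('X - z%:P)) a ->
  (forall Q, annihilates Q a -> \prod_(z <- r) ('X - z%:P) %| Q) ->
  {in r, forall z, z ^+ q \in r}.
Proof.
set M := \prod_(z <- r) _; set Mq := \prod_(z <- r) ('X - (z ^+ q)%:P) => lam0 annM minM.
have annMq : annihilates Mq a.
  exact: annihilates_comp_eigen lam0 (annihilates_dvdp annM (prod_XsubC_dvdp_comp_Xn r q)).
have eqM : M = Mq.
  apply/eqP; rewrite -eqp_monic ?monic_prod_XsubC // -dvdp_size_eqp ?minM //.
  by rewrite !size_prod_XsubC.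
have defMq : Mq = \prod_(w <- map (fun z => z ^+ q) r) ('X - w%:P) by rewrite big_map.
by move=> z zr; rewrite -root_prod_XsubC -/M eqM defMq root_prod_XsubC; apply: map_f.
Qed.

(* (X^N - 1) \Po X^q = (X^N - 1) S with S = q modulo X^N - 1, so S^j acts as q^j
   modulo the annihilator (X^N - 1)^(j+1). *)
Lemma Lseq_XnsubC_exp_eigen N j k : annihilates (('X^N - 1) ^+ j.+1) a ->
  lam * Lseq a ('X^k * ('X^N - 1) ^+ j) = (q ^ j)%:R * Lseq a ('X^(q * k) * ('X^N - 1) ^+ j).
Proof.
set W := 'X^N - 1; pose S : {poly K} := \sum_(i < q) 'X^N ^+ i => annW.
have dvdW : W ^+ j.+1 %| W ^+ j * (S ^+ j - (q ^ j)%:R).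
  by rewrite exprSr dvdp_mul // natrX subrXX dvdp_mulr // XnsubC_dvdp_geom_sub.
rewrite -Lseq_comp_eigen comp_polyM !rmorphXn /= comp_polyX XnsubC_comp_Xn -/S -exprM exprMn.
have -> : 'X^(q * k) * (W ^+ j * S ^+ j) =
    'X^(q * k) * (W ^+ j * (S ^+ j - (q ^ j)%:R)) + (q ^ j)%:R *: ('X^(q * k) * W ^+ j).
  by rewrite -mul_polyC rmorph_nat; ring.
by rewrite LseqD LseqZ (annihilates_dvdp annW dvdW ('X^(q * k))) add0r natrX.
Qed.
End EigenSequence.

Lemma eigen_annihilated_by_XnsubC_exp (K : closedFieldType) q (lam : K) a P :
  (1 < q)%N -> lam != 0 -> (forall k, a (q * k)%N = lam * a k) ->
  P != 0 -> ~~ root P 0 -> annihilates P a ->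
  exists2 N, (0 < N)%N & exists D, annihilates (('X^N - 1) ^+ D) a.
Proof.
move=> q1 lam0 a_eigen P0 P0root annP.
have [M [M0 annM minM]] := min_annihilator_exists P0 annP.
have [r defM] := closed_field_poly_normal M.
set M1 := \prod_(z <- r) _ in defM.
have eqM : M %= M1 by rewrite defM eqp_scale ?lead_coef_eq0.
have annM1 : annihilates M1 a by apply: annihilates_dvdp annM _; rewrite -(eqp_dvdr _ eqM).
have minM1 Q : annihilates Q a -> M1 %| Q by rewrite -(eqp_dvdl _ eqM); apply: minM.
have r0 : 0 \notin r.
  by apply: contra P0root; rewrite -root_prod_XsubC; apply: root_dvdp (minM1 _ annP).
have [N N0 unityN] := pow_closed_roots_of_unity q1 r0
  (min_annihilator_roots_pow_closed a_eigen lam0 annM1 minM1).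
exists N => //; exists (size r).
exact: annihilates_dvdp annM1 (prod_XsubC_dvdp_XnsubC_exp unityN).
Qed.

Lemma annihilated_eigen_norm_expn (K : numFieldType) q (lam : K) a N D k0 :
  (0 < N)%N -> (0 < q)%N -> lam != 0 -> (forall k, a (q * k)%N = lam * a k) ->
  a k0 != 0 -> annihilates (('X^N - 1) ^+ D) a -> exists j, `|lam| = (q ^ j)%:R.
Proof.
move=> N0 q0 lam0 a_eigen ak0; set W := 'X^N - 1 => annD.
have [j not_annj annj] : exists2 j, ~ annihilates (W ^+ j) a & annihilates (W ^+ j.+1) a.
  apply: exists_threshold annD => /annihilatesP/(_ k0)/eqP.
  by rewrite expr0 mulr1 LseqXn (negPf ak0).
pose y k := Lseq a ('X^k * W ^+ j).
have [k1 yk1] : exists k, y k != 0.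
  apply: NNPP => no_k; apply: not_annj; apply/annihilatesP => k.
  by apply/eqP/negPn/negP => yk; apply: no_k; exists k.
have qj0 : (q ^ j)%:R != 0 :> K by rewrite pnatr_eq0 -lt0n expn_gt0 q0.
have mu1 : `|lam / (q ^ j)%:R| = 1.
  apply: (@periodic_eigen_norm1 _ y N q _ k1 N0 _ _ _ yk1).
  - by rewrite mulf_neq0 ?invr_eq0.
  - move=> k; apply/eqP; rewrite -subr_eq0 /y -LseqB.
    have -> : 'X^(k + N) * W ^+ j - 'X^k * W ^+ j = 'X^k * W ^+ j.+1.
      by rewrite exprD exprS /W; ring.
    by rewrite annj.
  - move=> k; apply: (mulfI qj0).
    by rewrite /y -(Lseq_XnsubC_exp_eigen a_eigen k annj) mulrA mulrCA mulfV // mulr1.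
by exists j; rewrite -[lam](divfK qj0) normrM mu1 mul1r ger0_norm ?ler0n.
Qed.

Section TaylorSequences.
Variable R : realType.
Implicit Types (A B : {poly R}) (a : nat -> R).

Lemma is_taylorE A B a : is_taylor A B a <-> forall n, (B * \poly_(i < n.+1) a i)`_n = A`_n.
Proof.
by split=> tayl n; rewrite -tayl coefM; apply: eq_bigr => k _; rewrite coef_poly ltnS leq_subr.
Qed.

Lemma is_taylor_exists_nonzero A B a : A != 0 -> is_taylor A B a -> exists k, a k != 0.
Proof.
move=> /eqP A0 tayl; apply: NNPP => no_k; apply: A0; apply/polyP => n.
rewrite coef0 -tayl big1 // => k _.
have -> : a (n - k)%N = 0 by apply/eqP/negPn/negP => ak; apply: no_k; exists (n - k)%N.
by rewrite mulr0.
Qed.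

Lemma is_taylor_reverse_annihilates A B a : (size A < size B)%N -> is_taylor A B a ->
  annihilates (Poly (rev B)) a.
Proof.
move=> szAB tayl; apply/annihilatesP => n; set d := (size B).-1.
have szB : size B = d.+1 by rewrite prednK // (leq_ltn_trans _ szAB).
clearbody d.
(* The coefficient of x^(n + d) in B f = A vanishes because d = deg B > deg A. *)
have := tayl (n + d)%N; rewrite nth_default; last first.
  by rewrite (leq_trans _ (leq_addl n d)) // -ltnS -szB.
have -> : (n + d).+1 = (size B + n)%N by rewrite szB addSn addnC.
rewrite big_split_ord /= [X in X + _ = _ -> _](reindex_inj rev_ord_inj) /=.
rewrite [X in _ + X]big1 ?addr0 => [<-|k _]; last by rewrite nth_default ?mul0r // leq_addr.
rewrite mulrC Lseq_mulXn (@Lseq_widen _ _ _ (size B)); last first.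
  by rewrite (leq_trans (size_Poly _)) ?size_rev.
apply: eq_bigr => k _; have ltkB := ltn_ord k.
rewrite coef_Poly nth_rev //; congr (_ * a _); move: (nat_of_ord k) ltkB => i; rewrite szB; lia.
Qed.

Lemma in_spec_norm_expn q (lam : R) : (1 < q)%N -> lam != 0 -> in_spec q lam ->
  exists j, `|lam| = (q ^ j)%:R.
Proof.
move=> q1 lam0 [A [B [a [[B00 szAB] A0 tayl a_eigen]]]].
have [k0 ak0] := is_taylor_exists_nonzero A0 tayl.
have annP := is_taylor_reverse_annihilates szAB tayl.
have B0 : B != 0 by apply: contraNneq B00 => ->; rewrite horner0.
have P00 : (Poly (rev B))`_0 != 0.
  by rewrite coef_Poly nth_rev ?size_poly_gt0 // subn1 -lead_coefE lead_coef_eq0.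
pose f := real_complex R.
have annPC := (annihilates_map f a _).2 annP.
have [N N0 [D annD]] : exists2 N, (0 < N)%N & exists D,
    annihilates (('X^N - 1) ^+ D) (fun i => f (a i)).
  apply: (eigen_annihilated_by_XnsubC_exp (lam := f lam) q1 _ _ _ _ annPC).
  - by rewrite fmorph_eq0.
  - by move=> k; rewrite a_eigen rmorphM.
  - by rewrite map_poly_eq0; apply: contraNneq P00 => ->; rewrite coef0.
  - by rewrite -(rmorph0 f) fmorph_root /root horner_coef0.
have annR : annihilates (('X^N - 1) ^+ D) a.
  by rewrite -(annihilates_map f) rmorphXn rmorphB /= map_polyXn rmorph1.
exact: annihilated_eigen_norm_expn N0 (ltnW q1) lam0 a_eigen ak0 annR.
Qed.

Lemma periodic_in_spec p q (c : nat -> R) lam i0 : (i0 < p)%N -> c i0 != 0 ->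
  (forall k, c (q * k %% p)%N = lam * c (k %% p)%N) -> in_spec q lam.
Proof.
move=> i0p ci0 c_eigen; have p0 : (0 < p)%N := leq_ltn_trans (leq0n i0) i0p.
exists (\poly_(i < p) c i), (1 - 'X^p), (fun k => c (k %% p)%N); split => //.
- split; first by rewrite !hornerE expr0n eqn0Ngt p0 subr0 oner_neq0.
  by rewrite -opprB size_polyN -polyC1 size_XnsubC // ltnS size_poly.
- by apply: contraNneq ci0; move: (coef_poly p c i0); rewrite i0p => <- ->; rewrite coef0.
apply/is_taylorE => n; rewrite mulrBl mul1r coefB coefXnM !coef_poly ltnSn.
case: ltnP => [np | pn]; first by rewrite subr0 modn_small.
by rewrite ltnS leq_subr -{1}(subnK pn) modnDr subrr.
Qed.

Lemma in_spec0 q : (1 < q)%N -> in_spec q (0 : R).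
Proof.
move=> q1; apply: (@periodic_in_spec q q (fun i => (i == 1)%:R) 0 1) => // [|k].
  by rewrite eqxx oner_neq0.
by rewrite modnMr mul0r.
Qed.

Lemma in_spec_sign q (eps : R) : (1 < q)%N -> eps ^+ 2 = 1 -> in_spec q eps.
Proof.
(* Modulo q + 1, multiplication by q is negation, which swaps 1 and q. *)
move=> q1 eps2; pose c i : R := (i == 1)%:R + eps * (i == q)%:R.
apply: (@periodic_in_spec q.+1 q c eps 1) => [| |k]; first exact: ltnW.
  by rewrite /c eqxx (ltn_eqF q1) mulr0 addr0 oner_neq0.
rewrite -modnMmr; move: (ltn_pmod k (ltn0Sn q)); case: (k %% q.+1)%N => [_|u ltu].
  by rewrite muln0 /c (ltn_eqF (ltnW q1)) mulr0 addr0 mulr0.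
have -> : (q * u.+1 = u * q.+1 + (q - u))%N by nia.
rewrite modnMDl modn_small /c; last by lia.
have -> : (q - u == 1)%N = (u.+1 == q) by apply/eqP/eqP; lia.
have -> : (q - u == q)%N = (u == 0)%N by apply/eqP/eqP; lia.
by rewrite mulrDr mulrA -expr2 eps2 mul1r addrC.
Qed.

End TaylorSequences.

Theorem mainTheorem14 (R : realType) (m n : nat) :
  (2 <= m)%N -> (2 <= n)%N -> coprime m n ->
  forall lam : R, (in_spec m lam /\ in_spec n lam) <-> (lam = 0 \/ lam = 1 \/ lam = -1).
Proof.
move=> m2 n2 cop lam; split=> [[spec_m spec_n] | lam_sign].
  have [-> | lam0] := eqVneq lam 0; first by left.
  have [i norm_i] := in_spec_norm_expn m2 lam0 spec_m.
  have [j norm_j] := in_spec_norm_expn n2 lam0 spec_n.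
  have i0 : i = 0%N.
    by apply: (coprime_expn_eq (j := j) m2 cop); apply/eqP; rewrite -(eqr_nat R) -norm_i -norm_j.
  move/eqP: norm_i; rewrite i0 expn0 eqr_norml ler01 andbT.
  by case/orP => /eqP ->; right; [left | right].
have sign1 : (1 : R) ^+ 2 = 1 by rewrite expr1n.
have signN1 : (-1 : R) ^+ 2 = 1 by rewrite sqrrN expr1n.
by case: lam_sign => [|[|]] ->; split; apply: in_spec0 || apply: in_spec_sign.
Qed.
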